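(* Let $p$ be a prime and $b$ an integer with $1<b<p$. Write $p=bq+r$ with $0\le r<b$ and $p=b^{-1}s+t$ with $0\le t<b^{-1}$ (division algorithm). Then $$\{x_1^{p-kb}x_2^k\mid 0\le k\le q\}\cap\{x_1^mx_2^{p-mb^{-1}}\mid 0\le m\le s-1\}=\emptyset.$$
   Context: $x_1,x_2$ are variables of the polynomial ring $\mathbb{C}[x_1,x_2]$. $b^{-1}$ is the unique integer $0<b^{-1}<p$ with $bb^{-1}\equiv1\pmod p$. *)

From HB Require Import structures.
From mathcomp Require Import all_boot all_order all_algebra all_field.
From mathcomp Require Import mpoly.
Set Implicit Arguments. Unset Strict Implicit. Unset Printing Implicit Defensive.
Import GRing.Theory.
Local Open Scope ring_scope.

(* The monomial x_1^a x_2^c in C[x_1,x_2], with C = algC and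
   x_1 = 'X_0, x_2 = 'X_1 in {mpoly algC[2]}. *)
Definition mon2 (a c : nat) : {mpoly algC[2]} :=
  'X_(0 : 'I_2) ^+ a * 'X_(1 : 'I_2) ^+ c.

From HB Require Import structures.
From mathcomp Require Import all_boot all_order all_algebra all_field.
From mathcomp Require Import mpoly.
From mathcomp Require Import zify.
Set Implicit Arguments. Unset Strict Implicit. Unset Printing Implicit Defensive.
Import GRing.Theory.

(* Equating the exponents of a common monomial gives m + k b = p and
   m b^-1 + k = p.  Eliminating m yields k (b b^-1 - 1) = p (b^-1 - 1), and as
   p divides b b^-1 - 1 > 0 this forces k <= b^-1 - 1.  But the bound on m
   says (m + 1) b^-1 <= p, i.e. k >= b^-1. *)

Lemma mul_dvdn_leq (k c p d : nat) :
  0 < c -> p %| c -> k * c = p * d -> k <= d.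
Proof.
move=> /[swap] /dvdnP[j ->]; rewrite muln_gt0 => /andP[j_gt0 p_gt0].
rewrite mulnA [p * d]mulnC => /eqP; rewrite eqn_pmul2r // => /eqP <-.
by rewrite leq_pmulr.
Qed.

Lemma elim_common_exponent (p b binv k m : nat) :
  m + k * b = p -> m * binv + k = p ->
  k * (b * binv - 1) = p * (binv - 1).
Proof.
move=> Ep Ep'; have : (m + k * b) * binv = p * binv by rewrite Ep.
rewrite mulnDl !mulnBr !muln1 mulnA -{3}Ep'.
lia.
Qed.

Local Open Scope ring_scope.

Lemma mpolyX_inj (n : nat) (R : nzRingType) : injective (@mpolyX n R).
Proof. by move=> m m' /(congr1 (@msupp n R)); rewrite !msuppX => -[]. Qed.

Lemma mon2E (a c : nat) :
  mon2 a c = 'X_[U_(0 : 'I_2) *+ a + U_(1 : 'I_2) *+ c].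
Proof. by rewrite /mon2 !mpolyXn -!mpolyXD. Qed.

Lemma mon2_inj (a c a' c' : nat) : mon2 a c = mon2 a' c' -> a = a' /\ c = c'.
Proof.
rewrite !mon2E => /mpolyX_inj E.
have := congr1 (fun m : 'X_{1..2} => m 0) E.
have := congr1 (fun m : 'X_{1..2} => m 1) E.
by rewrite /= !mnmDE !mulmnE !mnm1E /= !mul0n !mul1n !add0n !addn0 => -> ->.
Qed.

Theorem lemma3p10 (p b binv : nat) :
  prime p -> (1 < b)%N -> (b < p)%N ->
  (0 < binv)%N -> (binv < p)%N -> (b * binv == 1 %[mod p])%N ->
  forall P : {mpoly algC[2]},
    (exists2 k : nat, (k <= p %/ b)%N & P = mon2 (p - k * b) k) ->
    (exists2 m : nat, (m <= p %/ binv - 1)%N & P = mon2 m (p - m * binv)) ->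
    False.
Proof.
move=> _ b_gt1 b_lt_p binv_gt0 binv_lt_p bbinv_mod P [k k_le_q ->] [m m_le].
move=> /mon2_inj[Em Ek].
have kb_le_p : (k * b <= p)%N by rewrite -leq_divRL // ltnW.
have pbinv_gt0 : (0 < p %/ binv)%N by rewrite divn_gt0 // ltnW.
have m_lt : (m < p %/ binv)%N by rewrite -(prednK pbinv_gt0) ltnS -subn1.
have mbinv_le_p : (m * binv + binv <= p)%N by rewrite -mulSnr -leq_divRL.
have bbinv_gt1 : (1 < b * binv)%N := leq_mul b_gt1 binv_gt0.
have p_dvd : (p %| b * binv - 1)%N by rewrite -eqn_mod_dvd // ltnW.
have Ep : (m + k * b = p)%N by rewrite -Em subnK.
have Ep' : (m * binv + k = p)%N.
  by rewrite Ek subnKC // (leq_trans (leq_addr _ _) mbinv_le_p).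
have k_le_binv1 : (k <= binv - 1)%N.
  by apply: mul_dvdn_leq p_dvd (elim_common_exponent Ep Ep'); rewrite subn_gt0.
move: k_le_binv1 Ep' mbinv_le_p binv_gt0; clear; lia.
Qed.
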